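(* If $A$ is a finitely generated pc monoid, then the seminormalization map $A\to A_{\mathrm{sn}}$ is a finite morphism, i.e. $A_{\mathrm{sn}}$ is a finite union of subsets $A\,b_i$ with $b_i\in A_{\mathrm{sn}}$.
   Context: A monoid is a pointed commutative monoid. pc: isomorphic to $C/I$ with $C$ cancellative ($ac=bc,c\ne0\Rightarrow a=b$) and $I$ an ideal. A monoid morphism $A\to B$ is finite if $B$ is a finite union of subsets $A b_i$ ($b_i\in B$). Reduced: $a^2=b^2,a^3=b^3\Rightarrow a=b$. Seminormal: reduced and $x^3=y^2\Rightarrow x=z^2,y=z^3$ for some $z$. The seminormalization $A\to A_{\mathrm{sn}}$ of a pc monoid is the (existing, unique) map to a seminormal monoid such that $A_{\mathrm{red}}\to A_{\mathrm{sn}}$ is injective and every $b\in A_{\mathrm{sn}}$ has $b^n\in A_{\mathrm{red}}$ for all $n\gg0$, where $A_{\mathrm{red}}$ is $A$ modulo $a\sim b$ iff $a^n=b^n$ for $n\gg0$. *)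

From Stdlib Require Import List Arith.
Import ListNotations.

Record pmonoid := PMonoid {
  carrier :> Type;
  mul : carrier -> carrier -> carrier;
  one : carrier;
  zero : carrier;
  mulA : forall a b c, mul a (mul b c) = mul (mul a b) c;
  mulC : forall a b, mul a b = mul b a;
  mul1m : forall a, mul one a = a;
  mul0m : forall a, mul zero a = zero
}.
Arguments mul {p} _ _.
Arguments one {p}.
Arguments zero {p}.

Fixpoint pow {M : pmonoid} (a : M) (n : nat) : M :=
  match n with O => one | S k => mul a (pow a k) end.

Definition prodl {M : pmonoid} (t : list M) : M := fold_right mul one t.

Definition is_morph {A B : pmonoid} (f : A -> B) : Prop :=
  (forall a b, f (mul a b) = mul (f a) (f b)) /\ f one = one /\ f zero = zero.

Definition cancellative (C : pmonoid) : Prop :=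
  forall a b c : C, mul a c = mul b c -> c <> zero -> a = b.

Definition is_ideal {C : pmonoid} (I : C -> Prop) : Prop :=
  I zero /\ forall a c, I a -> I (mul c a).

(** pc: A is isomorphic to C/I, with C cancellative and I an ideal; i.e. there is
    a surjective morphism C -> A whose fibres are I and the singletons outside I. *)
Definition is_pc (A : pmonoid) : Prop :=
  exists (C : pmonoid) (I : C -> Prop) (pi : C -> A),
    cancellative C /\ is_ideal I /\ is_morph pi /\
    (forall x : A, exists c, pi c = x) /\
    (forall a b : C, pi a = pi b <-> (a = b \/ (I a /\ I b))).

Definition fin_gen (A : pmonoid) : Prop :=
  exists gens : list A, forall a : A,
    a = zero \/ exists t : list A, (forall x, In x t -> In x gens) /\ a = prodl t.

Definition reduced (M : pmonoid) : Prop :=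
  forall a b : M, pow a 2 = pow b 2 -> pow a 3 = pow b 3 -> a = b.

Definition seminormal (M : pmonoid) : Prop :=
  reduced M /\
  forall x y : M, pow x 3 = pow y 2 -> exists z, x = pow z 2 /\ y = pow z 3.

(** a ~ b in A_red: a^n = b^n for all n >> 0. *)
Definition red_eq {A : pmonoid} (a b : A) : Prop :=
  exists N, forall n, N <= n -> pow a n = pow b n.

(** phi : A -> S is a seminormalization of A: S seminormal, the induced map
    A_red -> S injective, and every b in S has b^n in the image for n >> 0. *)
Definition is_seminormalization {A S : pmonoid} (phi : A -> S) : Prop :=
  is_morph phi /\ seminormal S /\
  (forall a b : A, phi a = phi b -> red_eq a b) /\
  (forall b : S, exists N, forall n, N <= n -> exists a : A, phi a = pow b n).

Definition finite_morph {A B : pmonoid} (f : A -> B) : Prop :=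
  exists bs : list B, forall b : B,
    exists a : A, exists bi, In bi bs /\ b = mul (f a) bi.

(* The monomials [psi e] in the generators of [A] are the image of [A] in [A_sn]. For
   [b <> 0], the powers [b^N] and [b^(N+1)] are monomials [psi e], [psi e'], so [b] is the
   fraction [psi e' / psi e]; on the face spanned by [e + e'] all monomials are nonzero,
   and there [A_sn] is cancellative because [A] is pc and [A_sn] is reduced. A maximal
   independent set [J] of generators of the face yields coordinates in [Z^J] determining
   fractions up to [D]-torsion. Writing [e = N q + r] gives [b = psi q * psi e' / psi (e + q)]
   with a fraction of bounded coordinates; these fall into finitely many classes, and
   Dickson's lemma applied to [q] leaves finitely many [b_i] for each of the finitely many
   faces. *)

From Stdlib Require Import List Arith Lia ZArith Bool Classical FunctionalExtensionality.
Import ListNotations.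

Section MonoidFacts.
Variable M : pmonoid.
Implicit Types a b c d u v : M.

Lemma mulm1 a : mul a one = a.
Proof. rewrite mulC. apply mul1m. Qed.

Lemma mulm0 a : mul a zero = zero.
Proof. rewrite mulC. apply mul0m. Qed.

Lemma mulmAC a b c : mul (mul a b) c = mul (mul a c) b.
Proof. rewrite <- !mulA. f_equal. apply mulC. Qed.

Lemma mulmCA a b c : mul a (mul b c) = mul b (mul a c).
Proof. rewrite !mulA. f_equal. apply mulC. Qed.

Lemma mulmACA a b c d : mul (mul a b) (mul c d) = mul (mul a c) (mul b d).
Proof. rewrite <- !mulA. f_equal. apply mulmCA. Qed.

Lemma mul_neq0_l a b : mul a b <> zero -> a <> zero.
Proof. intros H ->. apply H, mul0m. Qed.

Lemma pow_1 a : pow a 1 = a.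
Proof. apply mulm1. Qed.

Lemma pow_add a m n : pow a (m + n) = mul (pow a m) (pow a n).
Proof. induction m; simpl. - now rewrite mul1m. - now rewrite IHm, mulA. Qed.

Lemma pow_mul_l a b n : pow (mul a b) n = mul (pow a n) (pow b n).
Proof. induction n; simpl. - now rewrite mul1m. - rewrite IHn. apply mulmACA. Qed.

Lemma pow_pow a m n : pow (pow a m) n = pow a (m * n).
Proof.
  induction n; simpl. - now rewrite Nat.mul_0_r.
  - rewrite IHn, <- pow_add. f_equal. lia.
Qed.

Lemma pow_one n : pow (@one M) n = one.
Proof. induction n; simpl; auto. now rewrite IHn, mul1m. Qed.

Lemma reduced_eq_of_pow_eventually (HR : reduced M) u v J :
  (forall j, J <= j -> pow u j = pow v j) -> u = v.
Proof.
  revert u v. induction J as [|J IH]; intros u v H.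
  - rewrite <- (pow_1 u), <- (pow_1 v). apply H; lia.
  - destruct J as [|J]; [rewrite <- (pow_1 u), <- (pow_1 v); apply H; lia|].
    apply IH. intros j Hj.
    destruct (Nat.eq_dec j (S J)) as [->|Hne]; [|apply H; lia].
    apply HR; rewrite !pow_pow; apply H; lia.
Qed.

Lemma reduced_pow_neq0 (HR : reduced M) u n : u <> zero -> pow u (S n) <> zero.
Proof.
  intros Hu Hp. apply Hu, (reduced_eq_of_pow_eventually HR _ _ (S n)). intros j Hj.
  destruct j as [|j]; [lia|]. simpl pow at 2. rewrite mul0m.
  replace (S j) with (S n + (S j - S n)) by lia. now rewrite pow_add, Hp, mul0m.
Qed.

(** Every [j >= p * p] is a nonnegative combination of [p] and [p + 1]. *)
Lemma pow_eq_of_consecutive u v p :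
  pow u p = pow v p -> pow u (S p) = pow v (S p) ->
  forall j, p * p <= j -> pow u j = pow v j.
Proof.
  intros H1 H2 j Hj. destruct p as [|p].
  - simpl in H2. now rewrite !mulm1 in H2; subst.
  - pose proof (Nat.div_mod j (S p) ltac:(lia)).
    pose proof (Nat.mod_upper_bound j (S p) ltac:(lia)).
    assert (S p <= j / S p) by (apply Nat.div_le_lower_bound; lia).
    replace j with (S p * (j / S p - j mod S p) + S (S p) * (j mod S p)) by nia.
    now rewrite !pow_add, <- !pow_pow, H1, H2.
Qed.

Lemma reduced_eq_of_consecutive_pow (HR : reduced M) u v p :
  pow u p = pow v p -> pow u (S p) = pow v (S p) -> u = v.
Proof.
  intros H1 H2. apply (reduced_eq_of_pow_eventually HR _ _ (p * p)).
  exact (pow_eq_of_consecutive _ _ _ H1 H2).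
Qed.

End MonoidFacts.

Lemma morph_pow {A B : pmonoid} (f : A -> B) :
  is_morph f -> forall a n, f (pow a n) = pow (f a) n.
Proof. intros [Hm [H1 _]] a n. induction n; simpl; auto. now rewrite Hm, IHn. Qed.

Lemma pc_cancel (A : pmonoid) : is_pc A ->
  forall x y z : A, mul x z = mul y z -> mul x z <> zero -> x = y.
Proof.
  intros [C [I [pi [Hcan [[HI0 _] [[Hpm [_ Hp0]] [Hsurj Hfib]]]]]]] x y z Hxy Hnz.
  destruct (Hsurj x) as [x' <-], (Hsurj y) as [y' <-], (Hsurj z) as [z' <-].
  assert (HnI : ~ I (mul x' z')).
  { intros HI. apply Hnz. rewrite <- Hpm, <- Hp0. apply Hfib. auto. }
  rewrite <- !Hpm in Hxy.
  destruct (proj1 (Hfib _ _) Hxy) as [E|[E _]]; [|contradiction].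
  f_equal. apply (Hcan _ _ z' E). intros ->. apply HnI. rewrite mulC, mul0m. exact HI0.
Qed.

(** * Dickson's lemma *)

Lemma list_choice {X Y} (l : list X) (R : X -> Y -> Prop) :
  (forall x, In x l -> exists y, R x y) ->
  exists ys, forall x, In x l -> exists y, In y ys /\ R x y.
Proof.
  induction l as [|x l IH]; intros H.
  - exists []. intros x [].
  - destruct (H x (or_introl eq_refl)) as [y Hy], IH as [ys Hys]; [intros; apply H; now right|].
    exists (y :: ys). intros x' [<-|Hx'].
    + exists y. split; [now left|auto].
    + destruct (Hys x' Hx') as [y' [? ?]]. exists y'. split; [now right|auto].
Qed.

Definition leC {X} (cs : list (X -> nat)) (y x : X) := forall c, In c cs -> c y <= c x.

Definition covers {X} (cs : list (X -> nat)) (P Q : X -> Prop) (L : list X) :=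
  (forall y, In y L -> P y) /\ forall x, Q x -> exists y, In y L /\ leC cs y x.

Lemma covers_union {X I} (cs : list (X -> nat)) (l : list I) (P : X -> Prop) (Q : I -> X -> Prop) :
  (forall i, In i l -> exists L, covers cs P (Q i) L) ->
  exists L, covers cs P (fun x => exists i, In i l /\ Q i x) L.
Proof.
  induction l as [|i l IH]; intros H.
  - exists []. split; [intros y []|]. intros x [i [[] _]].
  - destruct (H i (or_introl eq_refl)) as [L1 [H1 H1']].
    destruct IH as [L2 [H2 H2']]; [intros; apply H; now right|].
    exists (L1 ++ L2). split.
    + intros y Hy. apply in_app_or in Hy. destruct Hy; auto.
    + intros x [i' [[<-|Hi'] Hq]].
      * destruct (H1' x Hq) as [y [Hy Hle]]. exists y. split; auto. apply in_or_app; auto.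
      * destruct (H2' x (ex_intro _ i' (conj Hi' Hq))) as [y [Hy Hle]].
        exists y. split; auto. apply in_or_app; auto.
Qed.

(** Given [p] in [P], an element not above [p] has some coordinate [c]
    below [c p]; the finitely many slices [c = t], [t < c p], are handled by induction
    on the number of coordinates. *)
Lemma dickson {X} (cs : list (X -> nat)) (P : X -> Prop) : exists L, covers cs P P L.
Proof.
  remember (length cs) as n eqn:Hn. revert cs P Hn.
  induction n as [|n IH]; intros cs P Hn.
  all: destruct (classic (exists x, P x)) as [[p Hp]|Hno];
    [|exists []; split; [intros y []|intros x Hx; exfalso; eauto]].
  - exists [p]. split; [intros y [<-|[]]; auto|].
    intros x _. exists p. split; [now left|]. destruct cs; [intros c []|discriminate].
  - assert (Hlow : forall c, In c cs ->
      exists L, covers cs P (fun x => P x /\ c x < c p) L).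
    { intros c Hc. destruct (in_split _ _ Hc) as [l1 [l2 ->]].
      rewrite length_app in Hn. simpl in Hn.
      destruct (covers_union (l1 ++ c :: l2) (seq 0 (c p)) P (fun t x => P x /\ c x = t))
        as [L [HL HL']].
      { intros t _.
        destruct (IH (l1 ++ l2) (fun x => P x /\ c x = t)) as [L [H1 H2]];
          [rewrite length_app; lia|].
        exists L. split; [intros y Hy; apply H1; auto|].
        intros x Hx. destruct (H2 x Hx) as [y [Hy Hle]]. exists y. split; auto.
        intros c' Hc'. apply in_app_or in Hc'. destruct Hc' as [Hc'|[<-|Hc']].
        - apply Hle, in_or_app; auto.
        - destruct (H1 y Hy), Hx. lia.
        - apply Hle, in_or_app; auto. }
      exists L. split; auto. intros x [Px Hlt]. apply HL'. exists (c x).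
      split; auto. apply in_seq. lia. }
    destruct (covers_union cs cs P (fun c x => P x /\ c x < c p) Hlow) as [L [HL HL']].
    exists (p :: L). split; [intros y [<-|Hy]; auto|].
    intros x Px. destruct (classic (leC cs p x)) as [Hle|Hnle].
    + exists p. split; [now left|auto].
    + destruct (HL' x) as [y [Hy Hle]].
      * apply NNPP. intros Hno. apply Hnle. intros c Hc. apply NNPP. intros Hlt.
        apply Hno. exists c. repeat split; auto. lia.
      * exists y. split; [now right|auto].
Qed.

Lemma dickson_witnesses {I X Y} (cs : list (X -> nat)) (W : I -> X -> Y -> Prop) (l : list I) :
  exists ys : list Y, forall i x y, In i l -> W i x y ->
    exists x' y', In y' ys /\ leC cs x' x /\ W i x' y'.
Proof.
  induction l as [|i l [ys2 H2]].
  - exists []. intros i x y [].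
  - destruct (dickson cs (fun x => exists y, W i x y)) as [L [HL HL']].
    destruct (list_choice L (W i) HL) as [ys1 H1].
    exists (ys1 ++ ys2). intros i' x y [<-|Hi'] Hw.
    + destruct (HL' x (ex_intro _ y Hw)) as [x' [Hx' Hle]].
      destruct (H1 x' Hx') as [y' [Hy' Hw']].
      exists x', y'. split; [apply in_or_app; auto|auto].
    + destruct (H2 i' x y Hi' Hw) as [x' [y' [Hy' Hw']]].
      exists x', y'. split; [apply in_or_app; auto|auto].
Qed.

(** * Exponent vectors and monomials *)

Definition vadd (u v : nat -> nat) : nat -> nat := fun i => u i + v i.
Definition vscale (m : nat) (u : nat -> nat) : nat -> nat := fun i => m * u i.
Definition vzero : nat -> nat := fun _ => 0.
Definition delta (j : nat) : nat -> nat := fun i => if i =? j then 1 else 0.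

Fixpoint sumn (n : nat) (f : nat -> nat) : nat :=
  match n with 0 => 0 | S n => f n + sumn n f end.

Definition vsum (n : nat) (f : nat -> nat -> nat) : nat -> nat := fun j => sumn n (fun i => f i j).

Lemma sumn_ext n f f' : (forall i, i < n -> f i = f' i) -> sumn n f = sumn n f'.
Proof. induction n; simpl; intros H; auto. rewrite H, IHn; auto. Qed.

Lemma sumn_add n f f' : sumn n (fun i => f i + f' i) = sumn n f + sumn n f'.
Proof. induction n; simpl; auto. rewrite IHn. lia. Qed.

Lemma sumn_scale n m f : sumn n (fun i => m * f i) = m * sumn n f.
Proof. induction n; simpl; auto. rewrite IHn. lia. Qed.

Lemma sumn_le n f f' : (forall i, i < n -> f i <= f' i) -> sumn n f <= sumn n f'.
Proof.
  induction n; simpl; intros H; auto.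
  pose proof (H n ltac:(lia)). enough (sumn n f <= sumn n f') by lia.
  apply IHn. intros; apply H; lia.
Qed.

Lemma sumn_zero n : sumn n (fun _ => 0) = 0.
Proof. induction n; simpl; auto. Qed.

Lemma sumn_eq0 n f : sumn n f = 0 -> forall i, i < n -> f i = 0.
Proof.
  induction n; simpl; intros H i Hi; [lia|].
  destruct (Nat.eq_dec i n); [subst; lia|]. apply IHn; lia.
Qed.

Lemma vsum_add n f g : vsum n (fun i => vadd (f i) (g i)) = vadd (vsum n f) (vsum n g).
Proof. apply functional_extensionality. intro j. apply sumn_add. Qed.

Lemma vsum_scale n m f : vsum n (fun i => vscale m (f i)) = vscale m (vsum n f).
Proof. apply functional_extensionality. intro j. apply sumn_scale. Qed.

Lemma vsum_S n f : vsum (S n) f = vadd (f n) (vsum n f).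
Proof. reflexivity. Qed.

Lemma vsum_delta n (p : nat -> bool) e j :
  vsum n (fun i => if p i then vscale (e i) (delta i) else vzero) j =
  if (j <? n) && p j then e j else 0.
Proof.
  unfold vsum. induction n as [|n IH]; [reflexivity|]. simpl sumn. rewrite IH.
  unfold vscale, delta, vzero. destruct (p n) eqn:Hpn, (p j) eqn:Hpj; cbn beta;
    destruct (Nat.eqb_spec j n), (Nat.ltb_spec j n), (Nat.ltb_spec j (S n)); subst;
    simpl; congruence || lia.
Qed.

Fixpoint prodn {M : pmonoid} (n : nat) (f : nat -> M) : M :=
  match n with 0 => one | S n => mul (f n) (prodn n f) end.

Definition monom {M : pmonoid} (h : nat -> M) (n : nat) (u : nat -> nat) : M :=
  prodn n (fun i => pow (h i) (u i)).

Section Monomials.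
Variables (M : pmonoid) (h : nat -> M).

Lemma prodn_ext n (f f' : nat -> M) : (forall i, i < n -> f i = f' i) -> prodn n f = prodn n f'.
Proof. induction n; simpl; intros H; auto. rewrite H, IHn; auto. Qed.

Lemma prodn_mul n (f f' : nat -> M) :
  prodn n (fun i => mul (f i) (f' i)) = mul (prodn n f) (prodn n f').
Proof. induction n; simpl. - now rewrite mulm1. - rewrite IHn. apply mulmACA. Qed.

Lemma prodn_one n : prodn n (fun _ => @one M) = one.
Proof. induction n; simpl; auto. rewrite IHn. apply mulm1. Qed.

Lemma monom_ext n u v : (forall i, i < n -> u i = v i) -> monom h n u = monom h n v.
Proof. intros H. apply prodn_ext. intros i Hi. now rewrite H. Qed.

Lemma monom_add n u v : monom h n (vadd u v) = mul (monom h n u) (monom h n v).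
Proof. unfold monom, vadd. rewrite <- prodn_mul. apply prodn_ext. intros. apply pow_add. Qed.

Lemma monom_vzero n : monom h n vzero = one.
Proof. apply prodn_one. Qed.

Lemma monom_scale n m u : monom h n (vscale m u) = pow (monom h n u) m.
Proof.
  unfold monom, vscale. induction n; simpl. - now rewrite pow_one.
  - rewrite IHn, pow_mul_l, pow_pow, Nat.mul_comm. reflexivity.
Qed.

Lemma monom_delta n j : j < n -> monom h n (delta j) = h j.
Proof.
  unfold monom, delta. induction n as [|n IH]; intros Hj; [lia|]. simpl.
  destruct (Nat.eqb_spec n j) as [->|Hne].
  - rewrite pow_1, (prodn_ext _ _ (fun _ => one)), prodn_one; [apply mulm1|].
    intros i Hi. destruct (Nat.eqb_spec i j); [lia|reflexivity].
  - rewrite IH by lia. apply mul1m.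
Qed.

End Monomials.

Definition supp (F : nat -> bool) (u : nat -> nat) : Prop := forall i, F i = false -> u i = 0.
Definition restrict (F : nat -> bool) (u : nat -> nat) : nat -> nat :=
  fun i => if F i then u i else 0.

Lemma supp_vadd F u v : supp F u -> supp F v -> supp F (vadd u v).
Proof. intros Hu Hv i Hi. unfold vadd. now rewrite Hu, Hv. Qed.

Lemma supp_vscale F m u : supp F u -> supp F (vscale m u).
Proof. intros Hu i Hi. unfold vscale. now rewrite Hu. Qed.

Lemma supp_mono (F F' : nat -> bool) u :
  (forall i, F i = true -> F' i = true) -> supp F u -> supp F' u.
Proof. intros H Hu i Hi. apply Hu. destruct (F i) eqn:E; auto. now rewrite (H i E) in Hi. Qed.

Lemma supp_restrict F u : supp F (restrict F u).
Proof. intros i Hi. unfold restrict. now rewrite Hi. Qed.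

Lemma vector_bound (u : nat -> nat) n : exists m, forall i, i < n -> u i <= m.
Proof.
  induction n as [|n [m Hm]]; [exists 0; lia|].
  exists (m + u n). intros i Hi. destruct (Nat.eq_dec i n); [subst; lia|]. specialize (Hm i). lia.
Qed.

Fixpoint bool_lists (n : nat) : list (list bool) :=
  match n with
  | 0 => [[]]
  | S n => flat_map (fun l => [true :: l; false :: l]) (bool_lists n)
  end.

Lemma nth_map_seq (F : nat -> bool) k : (forall i, k <= i -> F i = false) ->
  (fun i => nth i (map F (seq 0 k)) false) = F.
Proof.
  intros HF. apply functional_extensionality. intro i.
  destruct (Nat.lt_ge_cases i k) as [Hi|Hi].
  - rewrite (nth_indep _ false (F 0)) by (now rewrite length_map, length_seq).
    now rewrite map_nth, seq_nth.
  - rewrite nth_overflow by (now rewrite length_map, length_seq). now rewrite HF.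
Qed.

Lemma bool_lists_complete n l : length l = n -> In l (bool_lists n).
Proof.
  revert l. induction n as [|n IH]; intros [|x l] Hl; simpl in Hl; try lia; [now left|].
  simpl. apply in_flat_map. exists l. split; [apply IH; lia|]. destruct x; simpl; auto.
Qed.

(** * Cancellation and monomials in the seminormalization *)

Section Seminormalization.
Variables (A B : pmonoid) (phi : A -> B).
Hypotheses (HA : is_pc A) (Hmor : is_morph phi) (HR : reduced B)
  (Hinj : forall a b, phi a = phi b -> red_eq a b)
  (Hpow : forall b : B, exists N, forall n, N <= n -> exists a, phi a = pow b n).

Lemma cancel_high_pow n (x y z : B) a a' c :
  1 <= n -> phi a = pow x n -> phi a' = pow y n -> phi c = pow z n ->
  mul x z = mul y z -> mul x z <> zero ->
  exists M, forall m, M <= m -> pow x (n * m) = pow y (n * m).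
Proof.
  intros Hn Ha Ha' Hc Hxy Hnz.
  destruct (Hinj (mul a c) (mul a' c)) as [M HM].
  { rewrite !(proj1 Hmor), Ha, Ha', Hc, <- !pow_mul_l, Hxy. reflexivity. }
  exists (S M). intros m Hm.
  assert (Ecan : pow a m = pow a' m).
  { apply (pc_cancel A HA _ _ (pow c m)); rewrite <- !pow_mul_l; [apply HM; lia|].
    intros Hz. apply (reduced_pow_neq0 B HR (mul x z) (n * m - 1) Hnz).
    replace (S (n * m - 1)) with (n * m) by nia.
    rewrite pow_mul_l, <- !pow_pow, <- Ha, <- Hc, <- !morph_pow, <- (proj1 Hmor), <- pow_mul_l, Hz
      by auto.
    apply Hmor. }
  rewrite <- !pow_pow, <- Ha, <- Ha', <- !morph_pow by auto. now rewrite Ecan.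
Qed.

(** High powers of [x], [y], [z] come from [A], where [pc_cancel] applies; reducedness
    brings the equality back down to [x = y]. *)
Lemma cancel (x y z : B) : mul x z = mul y z -> mul x z <> zero -> x = y.
Proof.
  intros Hxy Hnz.
  destruct (Hpow x) as [Nx Hx], (Hpow y) as [Ny Hy], (Hpow z) as [Nz Hz].
  set (N := S (Nx + Ny + Nz)).
  destruct (Hx N) as [a1 ?], (Hy N) as [a1' ?], (Hz N) as [c1 ?],
    (Hx (S N)) as [a2 ?], (Hy (S N)) as [a2' ?], (Hz (S N)) as [c2 ?]; try lia.
  destruct (cancel_high_pow N x y z a1 a1' c1) as [M1 HM1]; auto; [lia|].
  destruct (cancel_high_pow (S N) x y z a2 a2' c2) as [M2 HM2]; auto; [lia|].
  apply (reduced_eq_of_pow_eventually B HR _ _ (M1 + M2)). intros m Hm.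
  apply (reduced_eq_of_consecutive_pow B HR _ _ N); rewrite !pow_pow, Nat.mul_comm;
    [apply HM1|apply HM2]; lia.
Qed.

Variable gens : list A.
Hypothesis Hgen : forall a : A,
  a = zero \/ exists t : list A, (forall x, In x t -> In x gens) /\ a = prodl t.

Let k := length gens.
Let g (i : nat) : A := nth i gens one.

Definition psi (u : nat -> nat) : B := phi (monom g k u).

Lemma psi_add u v : psi (vadd u v) = mul (psi u) (psi v).
Proof. unfold psi. rewrite monom_add. apply Hmor. Qed.

Lemma psi_scale m u : psi (vscale m u) = pow (psi u) m.
Proof. unfold psi. rewrite monom_scale. now apply morph_pow. Qed.

Lemma psi_ext u v : (forall i, i < k -> u i = v i) -> psi u = psi v.
Proof. intros H. unfold psi. f_equal. now apply monom_ext. Qed.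

Lemma psi_vzero : psi vzero = one.
Proof. unfold psi. rewrite monom_vzero. apply Hmor. Qed.

Lemma psi_vsum n f : psi (vsum n f) = prodn n (fun i => psi (f i)).
Proof. induction n; simpl. - apply psi_vzero. - now rewrite vsum_S, psi_add, IHn. Qed.

Lemma image_monom (a : A) :
  a = zero \/ exists e, a = monom g k e /\ forall i, k <= i -> e i = 0.
Proof.
  destruct (Hgen a) as [->|[t [Ht ->]]]; [now left|right].
  induction t as [|x t IH].
  - exists vzero. split; [symmetry; apply monom_vzero|reflexivity].
  - destruct IH as [e [He He0]]; [intros; apply Ht; now right|].
    destruct (In_nth gens x one (Ht x (or_introl eq_refl))) as [j [Hj Hx]].
    exists (vadd (delta j) e). split.
    + simpl. rewrite monom_add, monom_delta, He by exact Hj. unfold g. now rewrite Hx.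
    + intros i Hi. unfold vadd, delta. rewrite He0 by exact Hi.
      destruct (Nat.eqb_spec i j); [fold k in Hj; lia|reflexivity].
Qed.

Definition indicator (F : nat -> bool) : nat -> nat := fun i => if F i then 1 else 0.

Definition face (F : nat -> bool) : Prop :=
  (forall i, F i = true -> i < k) /\ psi (indicator F) <> zero.

Definition independent (J : nat -> bool) : Prop :=
  forall u v, supp J u -> supp J v -> psi u = psi v -> u = v.

Definition frac : Type := (nat -> nat) * (nat -> nat).

(** Equality of the formal fractions [psi (fst h) / psi (snd h)]. *)
Definition frac_eq (h t : frac) : Prop :=
  psi (vadd (fst h) (snd t)) = psi (vadd (snd h) (fst t)).

Definition fsupp (F : nat -> bool) (h : frac) : Prop := supp F (fst h) /\ supp F (snd h).
Definition padd (h t : frac) : frac := (vadd (fst h) (fst t), vadd (snd h) (snd t)).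
Definition pscale (m : nat) (h : frac) : frac := (vscale m (fst h), vscale m (snd h)).
Definition psub (h t : frac) : frac := (fun i => fst h i - fst t i, fun i => snd h i - snd t i).
Definition pzero : frac := (vzero, vzero).

Lemma frac_ext (h t : frac) :
  (forall i, fst h i = fst t i) -> (forall i, snd h i = snd t i) -> h = t.
Proof.
  destruct h, t; simpl; intros H1 H2. f_equal; apply functional_extensionality; auto.
Qed.

Lemma frac_eq_refl h : frac_eq h h.
Proof. unfold frac_eq. f_equal. apply functional_extensionality. intro. unfold vadd. lia. Qed.

Lemma frac_eq_sym h t : frac_eq h t -> frac_eq t h.
Proof.
  unfold frac_eq. intros H. rewrite !psi_add in *. rewrite mulC, <- H. apply mulC.
Qed.

Lemma frac_eq_padd m h t : frac_eq h t -> frac_eq (padd m h) (padd m t).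
Proof.
  unfold frac_eq, padd; simpl. intros H. rewrite !psi_add in *.
  rewrite (mulmACA _ (psi (fst m))), H, (mulmACA _ (psi (snd m))), (mulC _ (psi (snd m))).
  reflexivity.
Qed.

Lemma psi_relation_scale D m w x y : psi (vadd (vscale D w) x) = psi y ->
  psi (vadd (vscale (D * m) w) (vscale m x)) = psi (vscale m y).
Proof.
  intros H. rewrite psi_scale, <- H, <- psi_scale. f_equal.
  apply functional_extensionality. intro. unfold vadd, vscale. nia.
Qed.

Section Face.
Variable F : nat -> bool.
Hypothesis HF : face F.

Lemma supp_face_ge u i : supp F u -> k <= i -> u i = 0.
Proof.
  intros Hu Hi. apply Hu. destruct (F i) eqn:E; auto. pose proof (proj1 HF i E). lia.
Qed.

Lemma psi_face_neq0 u : supp F u -> psi u <> zero.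
Proof.
  intros Hu. destruct (vector_bound u k) as [m Hm].
  assert (E : vscale (S m) (indicator F) = vadd u (fun i => S m * indicator F i - u i)).
  { apply functional_extensionality. intros i. unfold vscale, vadd, indicator.
    destruct (F i) eqn:Fi.
    - specialize (Hm i (proj1 HF i Fi)). lia.
    - rewrite (Hu i Fi). lia. }
  apply (mul_neq0_l _ _ (psi (fun i => S m * indicator F i - u i))).
  rewrite <- psi_add, <- E, psi_scale. apply reduced_pow_neq0, HF; auto.
Qed.

Lemma psi_cancel w x y : supp F (vadd w x) -> psi (vadd w x) = psi (vadd w y) -> psi x = psi y.
Proof.
  intros Hs H. pose proof (psi_face_neq0 _ Hs) as Hnz.
  rewrite !psi_add, !(mulC _ (psi w)) in H. rewrite psi_add, mulC in Hnz.
  exact (cancel _ _ _ H Hnz).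
Qed.

Lemma frac_eq_trans x y z : fsupp F x -> fsupp F y -> fsupp F z ->
  frac_eq x y -> frac_eq y z -> frac_eq x z.
Proof.
  intros [Hx1 Hx2] [Hy1 Hy2] [Hz1 Hz2]. unfold frac_eq. intros H1 H2.
  apply (cancel _ _ (psi (vadd (fst y) (snd y)))).
  - rewrite !psi_add in *.
    transitivity (mul (mul (psi (fst x)) (psi (snd y))) (mul (psi (fst y)) (psi (snd z)))).
    + rewrite (mulmACA _ _ (psi (snd z))), (mulmACA _ _ (psi (snd y))), (mulC _ (psi (snd z))).
      reflexivity.
    + rewrite H1, H2, (mulC _ (psi (snd y))), mulmACA. reflexivity.
  - rewrite <- psi_add. apply psi_face_neq0. repeat apply supp_vadd; auto.
Qed.

Lemma fsupp_padd x y : fsupp F x -> fsupp F y -> fsupp F (padd x y).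
Proof. intros [? ?] [? ?]. split; simpl; apply supp_vadd; auto. Qed.

Lemma fsupp_pscale c x : fsupp F x -> fsupp F (pscale c x).
Proof. intros [? ?]. split; simpl; apply supp_vscale; auto. Qed.

Lemma fsupp_psub x y : fsupp F x -> fsupp F (psub x y).
Proof. intros [H1 H2]. split; intros i Hi; simpl; [rewrite H1|rewrite H2]; auto. Qed.

Definition frac_coords : list (frac -> nat) :=
  map (fun i (h : frac) => fst h i) (seq 0 k) ++ map (fun i (h : frac) => snd h i) (seq 0 k).

Lemma leC_frac_coords y x : leC frac_coords y x ->
  forall i, i < k -> fst y i <= fst x i /\ snd y i <= snd x i.
Proof.
  intros H i Hi. split;
    [apply (H (fun h : frac => fst h i)), in_or_app; left
    |apply (H (fun h : frac => snd h i)), in_or_app; right];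
    apply in_map_iff; exists i; split; auto; apply in_seq; lia.
Qed.

Lemma padd_psub h m : fsupp F h -> fsupp F m -> leC frac_coords m h -> h = padd m (psub h m).
Proof.
  intros [H1 H2] [M1 M2] Hle. pose proof (leC_frac_coords _ _ Hle) as Hle'.
  apply frac_ext; intro i; simpl; unfold vadd;
    (destruct (Nat.lt_ge_cases i k) as [Hi|Hi]; [specialize (Hle' i Hi); lia|]).
  - rewrite (supp_face_ge (fst h)), (supp_face_ge (fst m)); auto.
  - rewrite (supp_face_ge (snd h)), (supp_face_ge (snd m)); auto.
Qed.

Definition fsize (h : frac) : nat := sumn k (fun i => fst h i + snd h i).

Lemma fsize_padd m d : fsize (padd m d) = fsize m + fsize d.
Proof. unfold fsize. rewrite <- sumn_add. apply sumn_ext. intros i _. simpl. unfold vadd. lia. Qed.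

Lemma fsize_eq0 h : fsupp F h -> fsize h = 0 -> h = pzero.
Proof.
  intros [H1 H2] Hs. pose proof (sumn_eq0 _ _ Hs) as H.
  apply frac_ext; intro i; simpl; unfold vzero;
    (destruct (Nat.lt_ge_cases i k) as [Hi|Hi]; [specialize (H i Hi); simpl in H; lia|]);
    apply supp_face_ge; auto.
Qed.

Definition nonbasic (J : nat -> bool) (i : nat) : bool := F i && negb (J i).

(** * Coordinates on a face *)

Section Basis.
Variables (J : nat -> bool) (D : nat) (al be : nat -> nat -> nat).
Hypotheses (HJF : forall i, J i = true -> F i = true) (HJ : independent J) (HD : 1 <= D)
  (Hal : forall i, supp J (al i)) (Hbe : forall i, supp J (be i))
  (Hrel : forall i, nonbasic J i = true -> psi (vadd (vscale D (delta i)) (al i)) = psi (be i)).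

Definition combo (w : nat -> nat -> nat) (e : nat -> nat) : nat -> nat :=
  vsum k (fun i => if nonbasic J i then vscale (e i) (w i) else vzero).

(** In the group of fractions [D e = D e_J + sum_i e_i (be i - al i)] for [i] nonbasic, so
    [coord e] is [D] times the coordinates of [e] over the independent set [J]. *)
Definition cpos (e : nat -> nat) : nat -> nat := vadd (vscale D (restrict J e)) (combo be e).
Definition cneg (e : nat -> nat) : nat -> nat := combo al e.
Definition coord (e : nat -> nat) (j : nat) : Z := (Z.of_nat (cpos e j) - Z.of_nat (cneg e j))%Z.

Lemma combo_vadd w u v : combo w (vadd u v) = vadd (combo w u) (combo w v).
Proof.
  unfold combo. rewrite <- vsum_add. f_equal. apply functional_extensionality. intro i.
  destruct (nonbasic J i); apply functional_extensionality; intro j;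
    unfold vadd, vscale, vzero; lia.
Qed.

Lemma combo_vscale w m u : combo w (vscale m u) = vscale m (combo w u).
Proof.
  unfold combo. rewrite <- vsum_scale. f_equal. apply functional_extensionality. intro i.
  destruct (nonbasic J i); apply functional_extensionality; intro j;
    unfold vscale, vzero; lia.
Qed.

Lemma combo_wadd w w' e :
  combo (fun i => vadd (w i) (w' i)) e = vadd (combo w e) (combo w' e).
Proof.
  unfold combo. rewrite <- vsum_add. f_equal. apply functional_extensionality. intro i.
  destruct (nonbasic J i); apply functional_extensionality; intro j;
    unfold vadd, vscale, vzero; lia.
Qed.

Lemma supp_combo w e : (forall i, supp J (w i)) -> supp J (combo w e).
Proof.
  intros Hw j Hj. unfold combo, vsum. rewrite <- (sumn_zero k). apply sumn_ext.
  intros i _. destruct (nonbasic J i); [unfold vscale; now rewrite (Hw i j Hj)|reflexivity].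
Qed.

Lemma combo_le w e m j : (forall i, e i <= m) -> combo w e j <= m * sumn k (fun i => w i j).
Proof.
  intros He. unfold combo, vsum. rewrite <- sumn_scale. apply sumn_le. intros i _.
  specialize (He i). destruct (nonbasic J i); unfold vscale, vzero; nia.
Qed.

Lemma psi_combo w e :
  psi (combo w e) = prodn k (fun i => if nonbasic J i then pow (psi (w i)) (e i) else one).
Proof.
  unfold combo. rewrite psi_vsum. apply prodn_ext. intros i _.
  destruct (nonbasic J i); [apply psi_scale|apply psi_vzero].
Qed.

Lemma vscale_split e : supp F e ->
  vscale D e = vadd (vscale D (restrict J e)) (combo (fun i => vscale D (delta i)) e).
Proof.
  intros He. apply functional_extensionality. intro j.
  assert (E : combo (fun i => vscale D (delta i)) e j =
              D * (if (j <? k) && nonbasic J j then e j else 0)).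
  { rewrite <- vsum_delta. unfold combo, vsum. rewrite <- sumn_scale. apply sumn_ext.
    intros i _. destruct (nonbasic J i); unfold vscale, vzero; lia. }
  unfold vadd. rewrite E. unfold vscale, restrict, nonbasic.
  destruct (J j) eqn:Jj; [rewrite HJF by exact Jj; simpl; rewrite andb_false_r; lia|].
  destruct (F j) eqn:Fj; [|rewrite (He j Fj); simpl; rewrite andb_false_r; lia].
  rewrite (proj2 (Nat.ltb_lt j k)) by (apply HF; exact Fj). simpl. lia.
Qed.

Lemma psi_cpos e : supp F e -> psi (vadd (vscale D e) (cneg e)) = psi (cpos e).
Proof.
  intros He.
  assert (E : vadd (vscale D e) (cneg e) =
              vadd (vscale D (restrict J e)) (combo (fun i => vadd (vscale D (delta i)) (al i)) e)).
  { rewrite combo_wadd, (vscale_split e He). apply functional_extensionality. intro.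
    unfold vadd, cneg. lia. }
  rewrite E. unfold cpos. rewrite !psi_add, !psi_combo. f_equal. apply prodn_ext. intros i _.
  destruct (nonbasic J i) eqn:Hnb; auto. now rewrite Hrel.
Qed.

Lemma supp_cpos e : supp J (cpos e).
Proof. apply supp_vadd; [apply supp_vscale, supp_restrict|apply supp_combo, Hbe]. Qed.

Lemma supp_cneg e : supp J (cneg e).
Proof. apply supp_combo, Hal. Qed.

Lemma supp_basis u : supp J u -> supp F u.
Proof. apply supp_mono, HJF. Qed.

Lemma coord_eq_of_psi_eq u v : supp F u -> supp F v -> psi u = psi v ->
  forall j, coord u j = coord v j.
Proof.
  intros Hu Hv Huv.
  assert (E : vadd (cpos u) (cneg v) = vadd (cpos v) (cneg u)).
  { apply HJ; try apply supp_vadd; auto using supp_cpos, supp_cneg.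
    rewrite !psi_add, <- !psi_cpos by auto. rewrite !psi_add, !psi_scale, Huv. apply mulmAC. }
  intro j. pose proof (equal_f E j). unfold vadd, coord in *. lia.
Qed.

Lemma psi_scale_eq_of_coord_eq u v : supp F u -> supp F v ->
  (forall j, coord u j = coord v j) -> psi (vscale D u) = psi (vscale D v).
Proof.
  intros Hu Hv Huv.
  assert (E : vadd (cpos u) (cneg v) = vadd (cpos v) (cneg u)).
  { apply functional_extensionality. intro j. specialize (Huv j). unfold vadd, coord in *. lia. }
  apply (cancel _ _ (psi (vadd (cneg u) (cneg v)))).
  - rewrite <- !psi_add.
    transitivity (psi (vadd (vadd (vscale D u) (cneg u)) (cneg v))).
    { f_equal. apply functional_extensionality. intro. unfold vadd. lia. }
    rewrite psi_add, psi_cpos, <- psi_add, E, psi_add, <- psi_cpos, <- psi_add by auto.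
    f_equal. apply functional_extensionality. intro. unfold vadd. lia.
  - rewrite <- psi_add. apply psi_face_neq0.
    apply supp_vadd; [apply supp_vscale; auto|apply supp_basis, supp_vadd; apply supp_cneg].
Qed.

Lemma coord_vadd u v j : coord (vadd u v) j = (coord u j + coord v j)%Z.
Proof.
  unfold coord, cpos, cneg. rewrite !combo_vadd. unfold vadd, vscale, restrict.
  destruct (J j); lia.
Qed.

Lemma coord_vscale m u j : coord (vscale m u) j = (Z.of_nat m * coord u j)%Z.
Proof.
  unfold coord, cpos, cneg. rewrite !combo_vscale. unfold vadd, vscale, restrict.
  destruct (J j); lia.
Qed.

Lemma coord_out u j : J j = false -> coord u j = 0%Z.
Proof. intros Hj. unfold coord. now rewrite (supp_cpos u j Hj), (supp_cneg u j Hj). Qed.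

Definition coord_bound (j : nat) : nat := D + sumn k (fun i => al i j + be i j).

Lemma coord_le r m j : (forall i, r i <= m) ->
  (Z.abs (coord r j) <= Z.of_nat (m * coord_bound j))%Z.
Proof.
  intros Hr. unfold coord, cpos, cneg, coord_bound, vadd, vscale, restrict.
  pose proof (combo_le al r m j Hr). pose proof (combo_le be r m j Hr).
  rewrite sumn_add. assert ((if J j then r j else 0) <= m) by (destruct (J j); auto; lia).
  nia.
Qed.

Definition torsion (h : frac) : Prop := fsupp F h /\ forall j, coord (fst h) j = coord (snd h) j.

Lemma torsion_scale_eq0 m : torsion m -> frac_eq (pscale D m) pzero.
Proof.
  intros [[H1 H2] Hc]. unfold frac_eq, pscale, pzero; simpl.
  assert (E : forall u, vadd u vzero = u).
  { intro u. apply functional_extensionality. intro. unfold vadd, vzero. lia. }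
  rewrite !E. now apply psi_scale_eq_of_coord_eq.
Qed.

Lemma torsion_psub h m : torsion h -> torsion m -> leC frac_coords m h -> torsion (psub h m).
Proof.
  intros [Hh Hch] [Hm Hcm] Hle. split; [now apply fsupp_psub|]. intro j.
  pose proof (padd_psub h m Hh Hm Hle) as Eh. set (d := psub h m) in *.
  specialize (Hch j). specialize (Hcm j). rewrite Eh in Hch. cbn [fst snd padd] in Hch.
  rewrite !coord_vadd in Hch. lia.
Qed.

Fixpoint combos (l : list frac) : list frac :=
  match l with
  | [] => [pzero]
  | m :: l' => flat_map (fun t => map (fun c => padd (pscale c m) t) (seq 0 D)) (combos l')
  end.

Lemma in_combos m l t c : In t (combos l) -> c < D -> In (padd (pscale c m) t) (combos (m :: l)).
Proof.
  intros Ht Hc. simpl. apply in_flat_map. exists t. split; auto.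
  apply in_map_iff. exists c. split; auto. apply in_seq. lia.
Qed.

Lemma combos_cons_inv m l t : In t (combos (m :: l)) ->
  exists t0 c, In t0 (combos l) /\ c < D /\ t = padd (pscale c m) t0.
Proof.
  simpl. intros Ht. apply in_flat_map in Ht. destruct Ht as [t0 [Ht0 Hin]].
  apply in_map_iff in Hin. destruct Hin as [c [<- Hc]]. apply in_seq in Hc.
  exists t0, c. repeat split; auto. lia.
Qed.

Lemma fsupp_combos l : (forall m, In m l -> fsupp F m) -> forall t, In t (combos l) -> fsupp F t.
Proof.
  induction l as [|m l IH]; intros Hl t Ht.
  - destruct Ht as [<-|[]]. split; intros i _; reflexivity.
  - destruct (combos_cons_inv _ _ _ Ht) as [t0 [c [Ht0 [_ ->]]]].
    apply fsupp_padd; [apply fsupp_pscale, Hl; now left|].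
    apply IH; auto. intros; apply Hl; now right.
Qed.

Lemma pzero_in_combos l : In pzero (combos l).
Proof.
  induction l as [|m l IH]; [now left|].
  replace pzero with (padd (pscale 0 m) pzero) by (apply frac_ext; reflexivity).
  apply in_combos; auto.
Qed.

(** A coefficient reaching [D] wraps around to [0], since [D m] is equivalent to [0]. *)
Lemma combos_padd l : (forall m, In m l -> torsion m) ->
  forall x t, In x l -> In t (combos l) -> exists t', In t' (combos l) /\ frac_eq (padd x t) t'.
Proof.
  induction l as [|m l IH]; intros Hl x t Hx Ht; [destruct Hx|].
  destruct (combos_cons_inv _ _ _ Ht) as [t0 [c [Ht0 [Hc ->]]]].
  destruct Hx as [->|Hx].
  - destruct (Nat.eq_dec (S c) D) as [Ec|Ec].
    + exists (padd (pscale 0 x) t0). split; [apply in_combos; auto; lia|].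
      replace (padd x (padd (pscale c x) t0)) with (padd t0 (pscale D x))
        by (apply frac_ext; intro; simpl; unfold vadd, vscale; nia).
      replace (padd (pscale 0 x) t0) with (padd t0 pzero)
        by (apply frac_ext; intro; simpl; unfold vadd, vscale, vzero; lia).
      apply frac_eq_padd, torsion_scale_eq0, Hl. now left.
    + exists (padd (pscale (S c) x) t0). split; [apply in_combos; auto; lia|].
      replace (padd x (padd (pscale c x) t0)) with (padd (pscale (S c) x) t0)
        by (apply frac_ext; intro; simpl; unfold vadd, vscale; nia).
      apply frac_eq_refl.
  - destruct (IH (fun m' H => Hl m' (or_intror H)) x t0 Hx Ht0) as [t0' [Ht0' Ha]].
    exists (padd (pscale c m) t0'). split; [apply in_combos; auto|].
    replace (padd x (padd (pscale c m) t0)) with (padd (pscale c m) (padd x t0))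
      by (apply frac_ext; intro; simpl; unfold vadd, vscale; nia).
    now apply frac_eq_padd.
Qed.

(** Torsion fractions are generated by the finitely many minimal nonzero ones (Dickson),
    each killed by [D]. *)
Lemma torsion_finite : exists T, (forall t, In t T -> fsupp F t) /\
  forall h, torsion h -> exists t, In t T /\ frac_eq h t.
Proof.
  destruct (dickson frac_coords (fun h => torsion h /\ 0 < fsize h)) as [M [HM HM']].
  assert (HMt : forall m, In m M -> torsion m) by (intros m Hm; apply HM; auto).
  assert (HT : forall t, In t (combos M) -> fsupp F t)
    by (apply fsupp_combos; intros m Hm; apply HMt; auto).
  exists (combos M). split; auto.
  intros h. remember (fsize h) as n eqn:Hn. revert h Hn.
  induction n as [n IH] using lt_wf_ind. intros h Hn Hh.
  destruct (Nat.eq_dec n 0) as [->|Hn0].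
  { rewrite (fsize_eq0 h) by (apply Hh || auto). exists pzero.
    split; [apply pzero_in_combos|apply frac_eq_refl]. }
  destruct (HM' h) as [m [Hm Hle]]; [split; auto; lia|].
  destruct (HM m Hm) as [Hmt Hmpos].
  assert (Eh : h = padd m (psub h m)) by (apply padd_psub; auto; [apply Hh|apply Hmt]).
  destruct (IH (fsize (psub h m))) with (h := psub h m) as [t0 [Ht0 Ha0]]; auto.
  { pose proof (fsize_padd m (psub h m)) as Hs. rewrite <- Eh in Hs. lia. }
  { now apply torsion_psub. }
  destruct (combos_padd M HMt m t0 Hm Ht0) as [t' [Ht' Ha']].
  exists t'. split; auto.
  apply (frac_eq_trans _ (padd m t0)); auto.
  - apply Hh.
  - apply fsupp_padd; auto. apply Hmt.
  - rewrite Eh at 1. now apply frac_eq_padd.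
Qed.

Definition frac_coord (h : frac) (j : nat) : Z := (coord (fst h) j - coord (snd h) j)%Z.

Definition bounded (h : frac) : Prop :=
  forall j, (Z.abs (frac_coord h j) <= Z.of_nat (coord_bound j))%Z.

(** On bounded fractions the shifted coordinates [coord_bound j +- frac_coord h j] are
    natural numbers; requiring both to grow forces [frac_coord] to stay fixed. *)
Definition bounded_coords : list (frac -> nat) :=
  frac_coords ++
  map (fun j (h : frac) => Z.to_nat (Z.of_nat (coord_bound j) + frac_coord h j)) (seq 0 k) ++
  map (fun j (h : frac) => Z.to_nat (Z.of_nat (coord_bound j) - frac_coord h j)) (seq 0 k).

Lemma leC_bounded_coords m h : bounded m -> bounded h -> leC bounded_coords m h ->
  forall j, frac_coord m j = frac_coord h j.
Proof.
  intros Hm Hh Hle j. destruct (Nat.lt_ge_cases j k) as [Hj|Hj].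
    specialize (Hm j). specialize (Hh j).
    assert (A1 : Z.to_nat (Z.of_nat (coord_bound j) + frac_coord m j) <=
                 Z.to_nat (Z.of_nat (coord_bound j) + frac_coord h j)).
    { apply (Hle (fun h : frac => Z.to_nat (Z.of_nat (coord_bound j) + frac_coord h j))).
      apply in_or_app; right; apply in_or_app; left.
      apply in_map_iff; exists j; split; auto; apply in_seq; lia. }
    assert (A2 : Z.to_nat (Z.of_nat (coord_bound j) - frac_coord m j) <=
                 Z.to_nat (Z.of_nat (coord_bound j) - frac_coord h j)).
    { apply (Hle (fun h : frac => Z.to_nat (Z.of_nat (coord_bound j) - frac_coord h j))).
      apply in_or_app; right; apply in_or_app; right.
      apply in_map_iff; exists j; split; auto; apply in_seq; lia. }
    lia.
  - assert (J j = false).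
    { destruct (J j) eqn:E; auto. pose proof (proj1 HF j (HJF j E)). lia. }
    unfold frac_coord. now rewrite !coord_out.
Qed.

(** Above a minimal bounded fraction with the same coordinates, the difference is torsion. *)
Lemma bounded_finite : exists R, (forall r, In r R -> fsupp F r) /\
  forall h, fsupp F h -> bounded h -> exists r, In r R /\ frac_eq h r.
Proof.
  destruct torsion_finite as [T [HT HT']].
  destruct (dickson bounded_coords (fun h => fsupp F h /\ bounded h)) as [M [HM HM']].
  exists (flat_map (fun m => map (padd m) T) M). split.
  { intros r Hr. apply in_flat_map in Hr as [m [Hm Hr]]. apply in_map_iff in Hr as [t [<- Ht]].
    apply fsupp_padd; auto. apply HM; auto. }
  intros h Hh Hb. destruct (HM' h (conj Hh Hb)) as [m [Hm Hle]].
  destruct (HM m Hm) as [Hms Hmb].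
  assert (Eh : h = padd m (psub h m))
    by (apply padd_psub; auto; intros c Hc; apply Hle, in_or_app; auto).
  assert (Hd : torsion (psub h m)).
  { split; [now apply fsupp_psub|]. intro j.
    pose proof (leC_bounded_coords m h Hmb Hb Hle j) as Hw. set (d := psub h m) in *.
    unfold frac_coord in Hw. rewrite Eh in Hw. cbn [fst snd padd] in Hw.
    rewrite !coord_vadd in Hw. lia. }
  destruct (HT' _ Hd) as [t [Ht Ha]]. exists (padd m t). split.
  - apply in_flat_map. exists m. split; auto. now apply in_map.
  - rewrite Eh at 1. now apply frac_eq_padd.
Qed.

(** If [b^N = psi e] and [b^(N+1) = psi e'], then [b = psi q * psi e' / psi (e + q)] with
    [q = e / N], and this fraction is bounded because [coord e' = (1 + 1/N) coord e]. *)
Lemma bounded_decomposition (b : B) N e e' : 1 <= N ->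
  pow b N = psi e -> pow b (S N) = psi e' -> supp F e -> supp F e' ->
  exists q h, supp F q /\ fsupp F h /\ bounded h /\ mul b (psi (snd h)) = psi (vadd q (fst h)).
Proof.
  intros HN He He' Hse Hse'.
  set (q := fun i => e i / N). set (r := fun i => e i mod N).
  assert (Hq : supp F q) by (intros i Hi; unfold q; rewrite (Hse i Hi); apply Nat.Div0.div_0_l).
  assert (Er : e = vadd (vscale N q) r).
  { apply functional_extensionality. intro i. unfold vadd, vscale, q, r. apply Nat.div_mod. lia. }
  exists q, (e', vadd e q). repeat split; simpl; auto using supp_vadd.
  - intro j. unfold frac_coord; simpl.
    assert (HC := coord_eq_of_psi_eq (vscale (S N) e) (vscale N e')
      ltac:(now apply supp_vscale) ltac:(now apply supp_vscale)
      ltac:(rewrite !psi_scale, <- He, <- He', !pow_pow; f_equal; lia) j).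
    assert (Hr : (Z.abs (coord r j) <= Z.of_nat ((N - 1) * coord_bound j))%Z).
    { apply coord_le. intro i. unfold r. pose proof (Nat.mod_upper_bound (e i) N). lia. }
    rewrite !coord_vscale, Er, coord_vadd, coord_vscale in HC.
    rewrite Er, !coord_vadd, coord_vscale.
    rewrite Nat2Z.inj_mul, Nat2Z.inj_sub, Nat2Z.inj_succ in * by lia. simpl in Hr.
    set (x := coord q j) in *. set (y := coord r j) in *. set (z := coord e' j) in *.
    assert (Hw : (Z.of_nat N * (z - (Z.of_nat N * x + y + x)) = y)%Z) by nia.
    nia.
  - rewrite psi_add, mulA, <- He. change (mul b (pow b N)) with (pow b (S N)).
    rewrite He', <- psi_add. f_equal. apply functional_extensionality. intro. unfold vadd. lia.
Qed.

(** [b] is recovered as [psi (q - q') * b0] from a witness [b0] for a minimal [q' <= q]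
    in the same class of bounded fractions. *)
Lemma face_cover : exists bs : list B, forall b N e e', 1 <= N ->
  pow b N = psi e -> pow b (S N) = psi e' -> supp F e -> supp F e' ->
  exists a bi, In bi bs /\ b = mul (phi a) bi.
Proof.
  destruct bounded_finite as [R [HR1 HR2]].
  set (W := fun r (q : nat -> nat) (b0 : B) => supp F q /\
    exists h0, fsupp F h0 /\ frac_eq h0 r /\ mul b0 (psi (snd h0)) = psi (vadd q (fst h0))).
  destruct (dickson_witnesses (map (fun i (q : nat -> nat) => q i) (seq 0 k)) W R) as [bs Hbs].
  exists bs. intros b N e e' HN He He' Hse Hse'.
  destruct (bounded_decomposition b N e e') as [q [h [Hq [Hh [Hhb Hbh]]]]]; auto.
  destruct (HR2 h Hh Hhb) as [r [Hr Hhr]].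
  destruct (Hbs r q b) as [q' [b0 [Hb0 [Hle [Hq' [h0 [Hh0 [Hh0r Hb0h0]]]]]]]].
  { assumption. }
  { split; auto. exists h. auto. }
  assert (Hqq' : forall i, i < k -> q' i <= q i).
  { intros i Hi. apply (Hle (fun q : nat -> nat => q i)).
    apply in_map_iff. exists i. split; auto. apply in_seq. lia. }
  assert (Hhh0 : frac_eq h h0).
  { apply (frac_eq_trans _ r); auto. now apply frac_eq_sym. }
  exists (monom g k (fun i => q i - q' i)), b0. split; auto.
  change (phi (monom g k (fun i => q i - q' i))) with (psi (fun i => q i - q' i)).
  destruct h as [u v], h0 as [u0 v0]. destruct Hh as [Hu Hv], Hh0 as [Hu0 Hv0].
  unfold frac_eq in Hhh0. simpl in *.
  apply (cancel _ _ (psi (vadd v v0))).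
  - set (d := fun i => q i - q' i).
    transitivity (mul (psi q) (psi (vadd v u0))).
    + rewrite psi_add, mulA, Hbh, <- Hhh0, !psi_add. symmetry. apply mulA.
    + rewrite (psi_ext q (vadd d q')) by (intros i Hi; unfold vadd, d; specialize (Hqq' i Hi); lia).
      rewrite psi_add in Hb0h0. rewrite !psi_add, (mulmACA _ (psi d) b0), Hb0h0. apply mulmACA.
  - rewrite psi_add, mulA, Hbh, <- psi_add. apply psi_face_neq0. repeat apply supp_vadd; auto.
Qed.

End Basis.

(** * Independent generators and their relations *)

Definition adjoin (J : nat -> bool) (i : nat) : nat -> bool := fun j => J j || (j =? i).

Definition dependent (J : nat -> bool) (i : nat) : Prop :=
  exists u v, supp (adjoin J i) u /\ supp (adjoin J i) v /\ psi u = psi v /\ u <> v.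

Lemma adjoin_sub (J : nat -> bool) i : (forall j, J j = true -> F j = true) -> F i = true ->
  forall j, adjoin J i j = true -> F j = true.
Proof.
  unfold adjoin. intros HJF Fi j Hj. apply orb_true_iff in Hj as [Hj|Hj]; auto.
  apply Nat.eqb_eq in Hj. now subst.
Qed.

Lemma adjoin_split (J : nat -> bool) i u : J i = false -> supp (adjoin J i) u ->
  u = vadd (vscale (u i) (delta i)) (restrict J u).
Proof.
  intros Ji Hu. apply functional_extensionality. intro j. unfold vadd, vscale, delta, restrict.
  destruct (Nat.eqb_spec j i) as [->|Hji]; [rewrite Ji; lia|].
  destruct (J j) eqn:Jj; [lia|]. rewrite Hu; [lia|]. unfold adjoin. rewrite Jj.
  now apply Nat.eqb_neq.
Qed.

Lemma dependent_mono (J J' : nat -> bool) i :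
  (forall j, J j = true -> J' j = true) -> dependent J i -> dependent J' i.
Proof.
  intros H [u [v [Hu [Hv Huv]]]]. exists u, v.
  assert (Hm : forall j, adjoin J i j = true -> adjoin J' i j = true).
  { unfold adjoin. intros j Hj. apply orb_true_iff in Hj as [Hj|Hj];
      apply orb_true_iff; [left|right]; auto. }
  repeat split; try apply (supp_mono _ _ _ Hm); tauto.
Qed.

Lemma maximal_independent n : exists J, (forall i, J i = true -> F i = true) /\ independent J /\
  forall i, i < n -> F i = true -> J i = false -> dependent J i.
Proof.
  induction n as [|n [J [HJF [HJ Hdep]]]].
  - exists (fun _ => false). repeat split; [discriminate| |lia].
    intros u v Hu Hv _. apply functional_extensionality. intro j. now rewrite Hu, Hv.
  - destruct (F n) eqn:Fn; [destruct (classic (independent (adjoin J n))) as [Hind|Hnind]|].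
    + exists (adjoin J n). split; [exact (adjoin_sub J n HJF Fn)|split; [exact Hind|]].
      intros i Hi Fi Ji. unfold adjoin in Ji. apply orb_false_iff in Ji as [Ji Hin].
      apply Nat.eqb_neq in Hin. apply (dependent_mono J); [unfold adjoin; auto with bool|].
      apply Hdep; auto. lia.
    + exists J. repeat split; auto. intros i Hi Fi Ji.
      destruct (Nat.eq_dec i n) as [->|Hin]; [|apply Hdep; auto; lia].
      apply NNPP. intros Hnd. apply Hnind. intros u v Hu Hv Huv. apply NNPP. intros Hne.
      apply Hnd. exists u, v. auto.
    + exists J. repeat split; auto. intros i Hi Fi Ji.
      destruct (Nat.eq_dec i n) as [->|Hin]; [congruence|apply Hdep; auto; lia].
Qed.

(** Cancelling the common part [u i] of the [i]-th exponents leaves a relation for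
    [(v i - u i) delta i], which is nontrivial by independence of [J]. *)
Lemma relation_of_collision J i u v : (forall j, J j = true -> F j = true) -> independent J ->
  F i = true -> J i = false -> supp (adjoin J i) u -> supp (adjoin J i) v ->
  psi u = psi v -> u <> v -> u i <= v i ->
  exists a al be, 1 <= a /\ supp J al /\ supp J be /\
    psi (vadd (vscale a (delta i)) al) = psi be.
Proof.
  intros HJF HJ Fi Ji Hu Hv Huv Hne Hle.
  assert (Ev : v = vadd (vscale (u i) (delta i))
                        (vadd (vscale (v i - u i) (delta i)) (restrict J v))).
  { rewrite (adjoin_split J i v Ji Hv) at 1. apply functional_extensionality. intro j.
    unfold vadd, vscale. nia. }
  assert (Hc : psi (restrict J u) = psi (vadd (vscale (v i - u i) (delta i)) (restrict J v))).
  { apply (psi_cancel (vscale (u i) (delta i))).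
    - rewrite <- adjoin_split by auto. apply (supp_mono _ _ _ (adjoin_sub J i HJF Fi)), Hu.
    - now rewrite <- adjoin_split, <- Ev. }
  destruct (Nat.eq_dec (u i) (v i)) as [Heq|Hlt].
  - exfalso. apply Hne. rewrite Heq, Nat.sub_diag in Hc.
    replace (vadd (vscale 0 (delta i)) (restrict J v)) with (restrict J v) in Hc
      by (apply functional_extensionality; intro; reflexivity).
    apply HJ in Hc; try apply supp_restrict.
    rewrite (adjoin_split J i u Ji Hu), (adjoin_split J i v Ji Hv), Hc, Heq. reflexivity.
  - exists (v i - u i), (restrict J v), (restrict J u).
    repeat split; try apply supp_restrict; auto. lia.
Qed.

Lemma relation_of_dependent J i : (forall j, J j = true -> F j = true) -> independent J ->
  F i = true -> J i = false -> dependent J i ->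
  exists a al be, 1 <= a /\ supp J al /\ supp J be /\
    psi (vadd (vscale a (delta i)) al) = psi be.
Proof.
  intros HJF HJ Fi Ji [u [v [Hu [Hv [Huv Hne]]]]].
  destruct (Nat.le_ge_cases (u i) (v i)).
  - now apply (relation_of_collision J i u v).
  - apply (relation_of_collision J i v u); auto.
Qed.

Lemma basis_relations J : (forall j, J j = true -> F j = true) -> independent J ->
  (forall i, i < k -> F i = true -> J i = false -> dependent J i) ->
  exists D al be, 1 <= D /\ (forall i, supp J (al i)) /\ (forall i, supp J (be i)) /\
    forall i, nonbasic J i = true -> psi (vadd (vscale D (delta i)) (al i)) = psi (be i).
Proof.
  intros HJF HJ Hdep.
  assert (Hn : forall n, exists D al be, 1 <= D /\ (forall i, supp J (al i)) /\
    (forall i, supp J (be i)) /\ forall i, i < n -> nonbasic J i = true ->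
    psi (vadd (vscale D (delta i)) (al i)) = psi (be i)).
  { induction n as [|n [D [al [be [HD [Hal [Hbe Hrel]]]]]]].
    { exists 1, (fun _ => vzero), (fun _ => vzero). repeat split; auto; lia. }
    destruct (nonbasic J n) eqn:Hnb.
    2:{ exists D, al, be. repeat split; auto. intros i Hi Hi'.
        destruct (Nat.eq_dec i n) as [->|]; [congruence|apply Hrel; auto; lia]. }
    unfold nonbasic in Hnb. apply andb_true_iff in Hnb as [Fn Jn]. apply negb_true_iff in Jn.
    destruct (relation_of_dependent J n HJF HJ Fn Jn (Hdep n (proj1 HF n Fn) Fn Jn))
      as [a [al' [be' [Ha [Hal' [Hbe' Hr]]]]]].
    exists (D * a), (fun i => if i =? n then vscale D al' else vscale a (al i)),
      (fun i => if i =? n then vscale D be' else vscale a (be i)).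
    repeat split; [nia| | |].
    - intros i. destruct (i =? n); apply supp_vscale; auto.
    - intros i. destruct (i =? n); apply supp_vscale; auto.
    - intros i Hi Hnbi. destruct (Nat.eqb_spec i n) as [->|Hin].
      + rewrite Nat.mul_comm. now apply psi_relation_scale.
      + apply psi_relation_scale, Hrel; auto. lia. }
  destruct (Hn k) as [D [al [be [HD [Hal [Hbe Hrel]]]]]].
  exists D, al, be. repeat split; auto. intros i Hi. apply Hrel; auto.
  apply HF. unfold nonbasic in Hi. now apply andb_true_iff in Hi as [Fi _].
Qed.

Lemma face_cover_exists : exists bs : list B, forall b N e e', 1 <= N ->
  pow b N = psi e -> pow b (S N) = psi e' -> supp F e -> supp F e' ->
  exists a bi, In bi bs /\ b = mul (phi a) bi.
Proof.
  destruct (maximal_independent k) as [J [HJF [HJ Hdep]]].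
  destruct (basis_relations J HJF HJ Hdep) as [D [al [be [HD [Hal [Hbe Hrel]]]]]].
  exact (face_cover J D al be HJF HJ HD Hal Hbe Hrel).
Qed.

End Face.

Lemma pow_monomials (b : B) : b <> zero -> exists N e e', 1 <= N /\
  pow b N = psi e /\ pow b (S N) = psi e' /\
  (forall i, k <= i -> e i = 0) /\ (forall i, k <= i -> e' i = 0).
Proof.
  intros Hb. destruct (Hpow b) as [N HN].
  assert (Hmon : forall n, N <= n -> exists e, pow b (S n) = psi e /\ forall i, k <= i -> e i = 0).
  { intros n Hn. destruct (HN (S n)) as [a Ha]; [lia|].
    destruct (image_monom a) as [->|[e [-> He]]]; [|now exists e].
    exfalso. apply (reduced_pow_neq0 B HR b n Hb). rewrite <- Ha. apply Hmor. }
  destruct (Hmon N) as [e [He He0]], (Hmon (S N)) as [e' [He' He0']]; auto.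
  exists (S N), e, e'. repeat split; auto. lia.
Qed.

Definition support_face (e e' : nat -> nat) : nat -> bool := fun i => (i <? k) && (0 <? e i + e' i).

Lemma face_support (b : B) N e e' : b <> zero -> pow b N = psi e -> pow b (S N) = psi e' ->
  (forall i, k <= i -> e i = 0) -> (forall i, k <= i -> e' i = 0) ->
  face (support_face e e') /\ supp (support_face e e') e /\ supp (support_face e e') e'.
Proof.
  intros Hb He He' He0 He0'. set (F := support_face e e').
  assert (HsF : forall u, (forall i, k <= i -> u i = 0) -> (forall i, u i <= e i + e' i) ->
    supp F u).
  { intros u Hu Hue i Hi. unfold F, support_face in Hi.
    destruct (Nat.ltb_spec i k); [|apply Hu; lia].
    destruct (Nat.ltb_spec 0 (e i + e' i)); [discriminate|]. specialize (Hue i). lia. }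
  repeat split; [| |apply HsF; auto; lia..].
  - intros i Hi. unfold F, support_face in Hi. now apply andb_true_iff, proj1, Nat.ltb_lt in Hi.
  - apply (mul_neq0_l _ _ (psi (fun i => e i + e' i - indicator F i))).
    rewrite <- psi_add. replace (vadd (indicator F) _) with (vadd e e').
    + rewrite psi_add, <- He, <- He', <- pow_add, Nat.add_succ_r. apply reduced_pow_neq0; auto.
    + apply functional_extensionality. intro i. unfold vadd, indicator, F, support_face.
      destruct (Nat.ltb_spec i k), (Nat.ltb_spec 0 (e i + e' i)); simpl; lia.
Qed.

(** Faces are enumerated through their characteristic lists [map F (seq 0 k)]. *)
Lemma finite_cover : exists bs : list B, forall b, exists a bi, In bi bs /\ b = mul (phi a) bi.
Proof.
  destruct (list_choice (bool_lists k) (fun l bs =>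
    let F := fun i => nth i l false in face F ->
    forall b N e e', 1 <= N -> pow b N = psi e -> pow b (S N) = psi e' ->
    supp F e -> supp F e' -> exists a bi, In bi bs /\ b = mul (phi a) bi)) as [lbs Hlbs].
  { intros l _. destruct (classic (face (fun i => nth i l false))) as [Hf|Hnf].
    - destruct (face_cover_exists _ Hf) as [bs Hbs]. now exists bs.
    - exists []. contradiction. }
  exists (zero :: concat lbs). intros b.
  destruct (classic (b = zero)) as [->|Hb].
  { exists zero, zero. split; [now left|]. symmetry. apply mulm0. }
  destruct (pow_monomials b Hb) as [N [e [e' [HN [He [He' [He0 He0']]]]]]].
  destruct (face_support b N e e') as [Hface [HFe HFe']]; auto.
  destruct (Hlbs (map (support_face e e') (seq 0 k))) as [bs [Hbs Hcov]].
  { apply bool_lists_complete. now rewrite length_map, length_seq. }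
  rewrite nth_map_seq in Hcov.
  2:{ intros i Hi. unfold support_face. now rewrite (proj2 (Nat.ltb_ge i k) Hi). }
  destruct (Hcov Hface b N e e') as [a [bi [Hbi Heq]]]; auto.
  exists a, bi. split; auto. right. apply in_concat. eauto.
Qed.

End Seminormalization.

Theorem lemma1p17 (A S : pmonoid) (phi : A -> S) :
  is_pc A -> fin_gen A -> is_seminormalization phi -> finite_morph phi.
Proof.
  intros HA [gens Hgen] [Hmor [[HR _] [Hinj Hpow]]].
  exact (finite_cover A S phi HA Hmor HR Hinj Hpow gens Hgen).
Qed.
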